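(* Let $\lambda\ge0$, $d\ge0$ be constants and let $q$ be a probability measure on $(0,\infty)$ of the form $q=q_a+\sum_{r^j\in\mathcal D}p^j\delta_{r^j}$, with $q_a$ absolutely continuous w.r.t. Lebesgue measure, $\mathcal D\subset(0,\infty)$ finite, $p^j>0$, and $\int r\,q(dr)<\infty$. Let $r\mapsto\rho^r\ge0$ on $[0,\infty)$ have finite mass $N=\int_0^\infty\rho^r\,dr<\infty$ and satisfy the stationary equation $$\rho^r-\rho^s+\lambda q((s,r])=d\,N^{(s,r]}\quad\text{for all }0\le s<r,\qquad N^{(s,r]}:=\int_{(s,r]}\rho^\alpha\,d\alpha .$$ Then $\rho^r=\lambda\int_{(r,\infty)}e^{-d(\alpha-r)}q(d\alpha)$ for a.e. $r\ge0$.
   Context: $\delta_x$ denotes the Dirac measure at $x$. *)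

From HB Require Import structures.
From mathcomp Require Import all_boot all_order all_algebra.
From mathcomp Require Import all_classical all_reals all_analysis.

From HB Require Import structures.
From mathcomp Require Import all_boot all_order all_algebra.
From mathcomp Require Import all_classical all_reals all_analysis.
From mathcomp Require Import measurable_realfun ring.
Import Order.TTheory GRing.Theory Num.Theory numFieldNormedType.Exports.
Local Open Scope classical_set_scope.
Local Open Scope ring_scope.

(* For d > 0, multiply the stationary equation, written between r and x > r as
   rho(x) + lambda q((r,x]) = rho(r) + d N^{(r,x]}, by the exponential density
   d e^{-d(x-r)} and integrate over x > r.  By Tonelli the kernel turns the
   cumulative quantities q((r,x]) and N^{(r,x]} into \int_{(r,oo)} e^{-d(a-r)} q(da)
   and J = \int_{(r,oo)} e^{-d(a-r)} rho(a) da, while the kernel integrated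
   against rho(x) gives d J.  Since J is finite, the two copies of d J cancel.
   For d = 0 the equation reads rho(x) = rho(r) - lambda q((r,x]): nonnegativity
   of rho gives rho(r) >= lambda q((r,oo)), and a strict inequality would bound
   rho below by a positive constant on (r,oo), contradicting integrability.
   The identity thus holds at every r >= 0. *)

Lemma ge0_integralDZl {d} {T : measurableType d} {R : realType} (mu : measure T R)
    {D : set T} {f g : T -> \bar R} {a : R} :
  measurable D -> measurable_fun D f -> measurable_fun D g ->
  (forall x, D x -> 0 <= f x)%E -> (forall x, D x -> 0 <= g x)%E -> 0 <= a ->
  (\int[mu]_(x in D) (f x + a%:E * g x) =
   \int[mu]_(x in D) f x + a%:E * \int[mu]_(x in D) g x)%E.
Proof.
move=> mD mf mg f_ge0 g_ge0 a_ge0.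
rewrite ge0_integralD //; last 2 first.
- by move=> x Dx; rewrite mule_ge0 ?lee_fin ?g_ge0.
- exact: emeasurable_funM.
by rewrite ge0_integralZl ?lee_fin.
Qed.

Lemma measure_itv_oy_le {R : realType}
    (mu : {measure set (measurableTypeR R) -> \bar R}) (r : R) (b : \bar R) :
  (forall x, r < x -> (mu [set` `]r, x]] <= b)%E) -> (mu [set` `]r, +oo[] <= b)%E.
Proof.
move=> mu_le; pose F n := [set` `]r, r + n%:R]].
have F_cover : \bigcup_n F n = `]r, +oo[%classic.
  apply/seteqP; split => x /=.
    by move=> [n _]; rewrite /F /= !in_itv /= andbT => /andP[].
  rewrite in_itv /= andbT => rx; exists (Num.truncn (x - r)).+1 => //.
  by rewrite /F /= in_itv /= rx /= -lerBlDl ltW // truncnS_gt.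
have F_nd : {homo F : m n / (m <= n)%N >-> (m <= n)%O}.
  move=> m n mn; apply/subsetPset => x; rewrite /F /= !in_itv /= => /andP[-> /=].
  by move=> /le_trans; apply; rewrite lerD2l ler_nat.
have F_cvg := @nondecreasing_cvg_mu _ _ _ mu F (fun n => measurable_itv _)
  (bigcup_measurable (fun n _ => measurable_itv _)) F_nd.
rewrite -F_cover -(cvg_lim (@ereal_hausdorff R) F_cvg).
apply: lime_le; first by apply/cvg_ex; eexists; exact: F_cvg.
apply: nearW => n /=; case: n => [|n]; last first.
  by apply: mu_le; rewrite ltrDl.
by rewrite /F addr0 set_itvxx ?measure0 ?(le_trans _ (mu_le (r + 1) _)) ?ltrDl.
Qed.

Lemma integral_itv_oy_lbound {R : realType} (f : R -> R) (r e : R) :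
  0 < e -> measurable_fun `]r, +oo[ f -> (forall x, r < x -> e <= f x) ->
  (\int[lebesgue_measure]_(x in `]r, +oo[) (f x)%:E = +oo)%E.
Proof.
move=> e_gt0 mf f_ge; apply/eqP; rewrite eq_le leey /=.
have -> : +oo%E = (\int[lebesgue_measure]_(x in `]r, +oo[) cst e%:E x)%E.
  rewrite integral_cst // [X in (_ * X)%E](_ : _ = +oo%E); last first.
    by have := lebesgue_measure_itv `]r, +oo[; rewrite /= ltry addye.
  by rewrite gt0_muley ?lte_fin.
apply: ge0_le_integral => //.
- by move=> x _; rewrite lee_fin ltW.
- exact/measurable_EFinP.
- by move=> x; rewrite /= in_itv /= andbT => rx; rewrite lee_fin f_ge.
Qed.

Section exp_kernel.
Context {R : realType}.
Variables (c r : R).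
Hypothesis c_gt0 : 0 < c.

Definition exp_kernel (x : R) : R := c * expR (- (c * (x - r))).

Lemma exp_kernel_ge0 x : 0 <= exp_kernel x.
Proof. by rewrite mulr_ge0 ?expR_ge0 ?ltW. Qed.

Lemma continuous_exp_decay : continuous (fun x : R => expR (- (c * (x - r)))).
Proof.
move=> x; apply: continuous_comp; last exact: continuous_expR.
apply: cvgN; apply: cvgM; first exact: cvg_cst.
by apply: cvgB; [exact: cvg_id | exact: cvg_cst].
Qed.

Lemma continuous_exp_kernel : continuous exp_kernel.
Proof. by move=> x; apply: cvgM; [exact: cvg_cst | exact: continuous_exp_decay]. Qed.

Lemma is_derive_exp_decay (x : R) :
  is_derive x 1 (fun y : R => - expR (- (c * (y - r)))) (exp_kernel x).
Proof.
apply: is_derive_eq.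
by rewrite subr0 -[c *: _]/(c * 1) mulr1 mulrN opprK mulrC.
Qed.

Lemma integral_exp_kernel a :
  (\int[lebesgue_measure]_(x in `[a, +oo[) (exp_kernel x)%:E =
   (expR (- (c * (a - r))))%:E)%E.
Proof.
rewrite (@ge0_continuous_FTC2y _ _ (fun y => - expR (- (c * (y - r)))) _ 0).
- by rewrite sub0e EFinN oppeK.
- by move=> x _; exact: exp_kernel_ge0.
- exact/continuous_subspaceT/continuous_exp_kernel.
- rewrite -oppr0; apply: cvgN.
  change (expR (- (c * (x - r))) @[x --> +oo] --> 0).
  rewrite -/((fun z => expR (- z)) \o (fun x => c * (x - r))).
  apply: (@cvg_comp _ _ _ _ _ _ (pinfty_nbhs R)); last exact: cvgr_expR.
  exact/gt0_cvgMry/cvg_addrr.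
- by move=> x _; apply: ex_derive; exact: is_derive_exp_decay.
- by apply: cvgN; apply/cvg_at_right_filter; exact: continuous_exp_decay.
- by move=> x _; rewrite derive1E; apply: derive_val; exact: is_derive_exp_decay.
Qed.

Lemma integral_exp_kernel_itv_oy :
  (\int[lebesgue_measure]_(x in `]r, +oo[) (exp_kernel x)%:E = 1)%E.
Proof.
rewrite integral_itv_obnd_cbnd ?integral_exp_kernel //.
  by rewrite subrr mulr0 oppr0 expR0.
apply/measurable_EFinP/measurable_funTS.
exact: continuous_measurable_fun continuous_exp_kernel.
Qed.

End exp_kernel.

Section exp_kernel_fubini.
Context {R : realType}.
Variables (c r : R).
Hypothesis c_gt0 : 0 < c.
Variable mu : {sigma_finite_measure set (measurableTypeR R) -> \bar R}.
Variable phi : R -> R.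
Hypothesis measurable_phi : measurable_fun setT phi.
Hypothesis phi_ge0 : forall x, 0 <= phi x.

Definition below_diagonal : set (R * R) := [set p | r < p.2 /\ p.2 <= p.1].

Lemma measurable_below_diagonal : measurable below_diagonal.
Proof.
have -> : below_diagonal = snd @^-1` `]r, +oo[ `&` [set p | p.2 <= p.1].
  by apply/seteqP; split => -[x a]; rewrite /= in_itv /= andbT.
apply: measurable_fun_le.
- by rewrite -[X in measurable X]setTI; exact: measurable_snd.
- exact: measurable_funS measurable_snd.
- exact: measurable_funS measurable_fst.
Qed.

Lemma in_below_diagonal x a : ((x, a) \in below_diagonal) = (a \in `]r, x]).
Proof.
by rewrite in_itv /=; apply/idP/idP => [/set_mem[-> ->]|/andP[ra ax]] //; apply/mem_set.
Qed.

Let f (p : R * R) : \bar R :=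
  (\1_below_diagonal p * exp_kernel c r p.1 * phi p.2)%:E.

Let f_ge0 p : (0 <= f p)%E.
Proof.
by rewrite lee_fin (mulr_ge0 (mulr_ge0 _ (exp_kernel_ge0 _ _ c_gt0 _)) (phi_ge0 _)).
Qed.

Let measurable_f : measurable_fun setT f.
Proof.
apply/measurable_EFinP; apply: measurable_funM; last first.
  exact: measurableT_comp measurable_phi measurable_snd.
apply: measurable_funM; first exact: measurable_indic measurable_below_diagonal.
apply: measurableT_comp measurable_fst.
exact: continuous_measurable_fun (continuous_exp_kernel c r).
Qed.

Let f_sliceE x :
  (\int[mu]_a f (x, a) =
   (exp_kernel c r x)%:E * \int[mu]_(a in `]r, x]) (phi a)%:E)%E.
Proof.
rewrite -ge0_integralZl_EFin ?exp_kernel_ge0 //; last 2 first.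
- by move=> a _; rewrite lee_fin.
- exact/measurable_EFinP/measurable_funTS.
rewrite [RHS]integral_mkcond; apply: eq_integral => a _.
rewrite /f patchE mem_setE indicE in_below_diagonal.
by case: (a \in _); rewrite ?mul1r ?mul0r ?mulr0 ?EFinM.
Qed.

Let cumulative_integral_eq0 x : x <= r -> (\int[mu]_(a in `]r, x]) (phi a)%:E = 0)%E.
Proof. by move=> xr; rewrite set_itv_ge ?integral_set0 // bnd_simp -leNgt. Qed.

Let f_sectionE a :
  (\int[lebesgue_measure]_x f (x, a) =
   ((fun a => (expR (- (c * (a - r))) * phi a)%:E) \_ `]r, +oo[) a)%E.
Proof.
rewrite patchE mem_setE in_itv /= andbT; case: ltP => ra; last first.
  apply: integral0_eq => x _.
  by rewrite /f indicE in_below_diagonal in_itv /= ltNge ra !mul0r.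
transitivity
  (\int[lebesgue_measure]_(x in `[a, +oo[) ((phi a)%:E * (exp_kernel c r x)%:E))%E.
  rewrite [RHS]integral_mkcond; apply: eq_integral => x _.
  rewrite /f patchE mem_setE indicE in_below_diagonal !in_itv /= ra andbT.
  by case: (a <= x); rewrite ?mul1r ?mul0r // mulrC EFinM.
rewrite ge0_integralZl_EFin //; last 2 first.
- by move=> x _; rewrite lee_fin exp_kernel_ge0.
- apply/measurable_EFinP/measurable_funTS.
  exact: continuous_measurable_fun (continuous_exp_kernel c r).
by rewrite integral_exp_kernel // -EFinM mulrC.
Qed.

Lemma measurable_exp_kernel_cumulative :
  measurable_fun setT
    (fun x => (exp_kernel c r x)%:E * \int[mu]_(a in `]r, x]) (phi a)%:E)%E.
Proof.
apply: (eq_measurable_fun (fubini_F mu f)).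
  by move=> x _; rewrite /fubini_F f_sliceE.
exact: measurable_fun_fubini_tonelli_F.
Qed.

Lemma integral_exp_kernel_cumulative :
  (\int[lebesgue_measure]_(x in `]r, +oo[)
      ((exp_kernel c r x)%:E * \int[mu]_(a in `]r, x]) (phi a)%:E) =
   \int[mu]_(a in `]r, +oo[) (expR (- (c * (a - r))) * phi a)%:E)%E.
Proof.
rewrite integral_mkcond [RHS]integral_mkcond.
transitivity (\int[lebesgue_measure]_x \int[mu]_a f (x, a))%E.
  apply: eq_integral => x _; rewrite f_sliceE patchE mem_setE in_itv /= andbT.
  by case: ltP => // xr; rewrite cumulative_integral_eq0 ?mule0.
rewrite (@fubini_tonelli _ _ _ _ _ lebesgue_measure mu f measurable_f f_ge0).
by apply: eq_integral => a _; rewrite f_sectionE.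
Qed.

End exp_kernel_fubini.

Section stationary_density.
Context {R : realType}.
Notation leb := (@lebesgue_measure R).
Variables (lam dd : R) (q : probability (measurableTypeR R) R) (rho : R -> R).
Hypothesis lam_ge0 : 0 <= lam.
Hypothesis rho_ge0 : forall r, 0 <= r -> 0 <= rho r.
Hypothesis rho_integrable : leb.-integrable `[0, +oo[ (fun r => (rho r)%:E).
Hypothesis stationary : forall s r, 0 <= s -> s < r ->
  ((rho r - rho s)%:E + lam%:E * q [set` `]s, r]])%E =
  (dd%:E * \int[leb]_(a in `]s, r]) (rho a)%:E)%E.
Variable r : R.
Hypothesis r_ge0 : 0 <= r.

Let rho0 : R -> R := rho \_ (`[0, +oo[ : set R).

Let rho0E x : r < x -> rho0 x = rho x.
Proof.
by move=> rx; rewrite /rho0 patchE mem_setE in_itv /= andbT (le_trans r_ge0 (ltW rx)).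
Qed.

Let rho0_ge0 x : 0 <= rho0 x.
Proof.
rewrite /rho0 patchE mem_setE in_itv /= andbT.
by case: ifP => [/rho_ge0 //|_]; exact: lexx.
Qed.

Let measurable_rho0 : measurable_fun setT rho0.
Proof.
apply: (@measurable_restrictT _ _ _ _ (`[0, +oo[ : set R) rho (measurable_itv _)).1.
by apply/measurable_EFinP; exact: (measurable_int _ rho_integrable).
Qed.

Let integral_rho0_lty : (\int[leb]_(x in `]r, +oo[) (rho0 x)%:E < +oo)%E.
Proof.
have [_] := integrableP _ _ _ rho_integrable; apply: le_lt_trans.
have -> : (\int[leb]_(x in `[0%R, +oo[) `|(rho x)%:E| =
           \int[leb]_(x in `[0%R, +oo[) (rho0 x)%:E)%E.
  apply: eq_integral => x; rewrite inE /= in_itv /= andbT => x0.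
  by rewrite /rho0 patchE mem_setE in_itv /= andbT x0 ger0_norm ?rho_ge0.
apply: ge0_subset_integral => //.
- exact/measurable_EFinP/measurable_funTS.
- by move=> x _; rewrite lee_fin.
- by move=> x /=; rewrite !in_itv /= !andbT => /ltW; exact: le_trans.
Qed.

Let Q x := fine (q [set` `]r, x]]).
Let N x := fine (\int[leb]_(a in `]r, x]) (rho0 a)%:E).

Let q_fin (A : set R) : measurable A -> q A = (fine (q A))%:E.
Proof.
move=> mA; rewrite fineK // ge0_fin_numE //.
exact: le_lt_trans (probability_le1 q mA) (ltey 1).
Qed.

Let NE x : (\int[leb]_(a in `]r, x]) (rho0 a)%:E)%E = (N x)%:E.
Proof.
rewrite fineK // ge0_fin_numE; last by apply: integral_ge0 => a _; rewrite lee_fin.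
apply: le_lt_trans integral_rho0_lty; apply: ge0_subset_integral => //.
- exact/measurable_EFinP/measurable_funTS.
- by move=> a _; rewrite lee_fin.
- by move=> a /=; rewrite !in_itv /= andbT => /andP[].
Qed.

Let stationary_at x : r < x -> rho x + lam * Q x = rho r + dd * N x.
Proof.
move=> rx; rewrite /Q /N; have := stationary r x r_ge0 rx.
have -> : (\int[leb]_(a in `]r, x]) (rho a)%:E = \int[leb]_(a in `]r, x]) (rho0 a)%:E)%E.
  by apply: eq_integral => a; rewrite inE /= in_itv /= => /andP[ra _]; rewrite rho0E.
rewrite q_fin // NE -EFinM -EFinD -EFinM => -[<-]; ring.
Qed.

Section positive_rate.
Hypothesis dd_gt0 : 0 < dd.

Let k := exp_kernel dd r.
Let J := (\int[leb]_(a in `]r, +oo[) (expR (- (dd * (a - r))) * rho0 a)%:E)%E.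

Let k_ge0 x : (0 <= (k x)%:E)%E.
Proof. by rewrite lee_fin exp_kernel_ge0. Qed.

Let measurable_k : measurable_fun setT k.
Proof. exact: continuous_measurable_fun (continuous_exp_kernel dd r). Qed.

Let J_fin : J \is a fin_num.
Proof.
have measurable_decay : measurable_fun setT (fun a : R => expR (- (dd * (a - r)))).
  exact: continuous_measurable_fun (continuous_exp_decay dd r).
rewrite ge0_fin_numE; last first.
  by apply: integral_ge0 => a _; rewrite lee_fin mulr_ge0 ?expR_ge0.
apply: le_lt_trans integral_rho0_lty; apply: ge0_le_integral => //.
- by move=> a _; rewrite lee_fin mulr_ge0 ?expR_ge0.
- exact/measurable_EFinP/measurable_funTS/measurable_funM.
- exact/measurable_EFinP/measurable_funTS.
- move=> a; rewrite /= in_itv /= andbT => ra; rewrite lee_fin ler_piMl // expR_le1.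
  by rewrite oppr_le0 mulr_ge0 ?(ltW dd_gt0) // subr_ge0 ltW.
Qed.

Let q_itvE x : q [set` `]r, x]] = (\int[q]_(a in `]r, x]) (cst 1 a)%:E)%E.
Proof. by have := integral_cst q (measurable_itv `]r, x]) 1; rewrite mul1e. Qed.

Let measurable_kq :
  measurable_fun `]r, +oo[ (fun x => (k x)%:E * q [set` `]r, x]])%E.
Proof.
apply: measurable_funTS; apply: eq_measurable_fun; last first.
  exact: measurable_exp_kernel_cumulative _ _ dd_gt0 q _ (measurable_cst _) (fun=> ler01).
by move=> x _; rewrite q_itvE.
Qed.

Let integral_kq : (\int[leb]_(x in `]r, +oo[) ((k x)%:E * q [set` `]r, x]]) =
  \int[q]_(a in `]r, +oo[) (expR (- (dd * (a - r))))%:E)%E.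
Proof.
under eq_integral do rewrite q_itvE.
rewrite (integral_exp_kernel_cumulative _ _ dd_gt0 q _ (measurable_cst _) (fun=> ler01)).
by apply: eq_integral => a _; rewrite mulr1.
Qed.

Let measurable_kN : measurable_fun `]r, +oo[
  (fun x => (k x)%:E * \int[leb]_(a in `]r, x]) (rho0 a)%:E)%E.
Proof.
apply: measurable_funTS.
exact: (measurable_exp_kernel_cumulative _ _ dd_gt0 leb _ measurable_rho0 rho0_ge0).
Qed.

Let integral_krho : (\int[leb]_(x in `]r, +oo[) (k x * rho0 x)%:E = dd%:E * J)%E.
Proof.
rewrite -ge0_integralZl_EFin ?(ltW dd_gt0) //; last 2 first.
- by move=> x _; rewrite lee_fin mulr_ge0 ?expR_ge0.
- apply/measurable_EFinP/measurable_funTS/measurable_funM => //.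
  exact: continuous_measurable_fun (continuous_exp_decay dd r).
by apply: eq_integral => x _; rewrite -EFinM mulrA.
Qed.

Let integral_rk : (\int[leb]_(x in `]r, +oo[) (rho r * k x)%:E = (rho r)%:E)%E.
Proof.
under eq_integral do rewrite EFinM.
rewrite ge0_integralZl_EFin ?rho_ge0 ?integral_exp_kernel_itv_oy ?mule1 //.
exact/measurable_EFinP/measurable_funTS.
Qed.

Let measurable_krho : measurable_fun `]r, +oo[ (fun x => (k x * rho0 x)%:E).
Proof. exact/measurable_EFinP/measurable_funTS/measurable_funM. Qed.

Let measurable_rk : measurable_fun `]r, +oo[ (fun x => (rho r * k x)%:E).
Proof. exact/measurable_EFinP/measurable_funTS/measurable_funM. Qed.

Let stationary_kernel : {in `]r, +oo[%classic,
  (fun x => (k x * rho0 x)%:E + lam%:E * ((k x)%:E * q [set` `]r, x]]))%E =1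
  (fun x => (rho r * k x)%:E +
            dd%:E * ((k x)%:E * \int[leb]_(a in `]r, x]) (rho0 a)%:E))%E}.
Proof.
move=> x; rewrite inE /= in_itv /= andbT => rx.
rewrite q_fin // NE -!EFinM -!EFinD rho0E //; congr EFin.
transitivity (k x * (rho x + lam * Q x)); first by rewrite /Q; ring.
by rewrite stationary_at //; ring.
Qed.

Lemma stationary_density_pos :
  (rho r)%:E = (lam%:E * \int[q]_(a in `]r, +oo[) (expR (- (dd * (a - r))))%:E)%E.
Proof.
have := @eq_integral _ _ _ leb _ _ _ stationary_kernel.
rewrite (ge0_integralDZl leb (measurable_itv _) measurable_krho measurable_kq) //;
  first last.
- by move=> x _; rewrite mule_ge0.
- by move=> x _; rewrite lee_fin mulr_ge0 ?exp_kernel_ge0.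
rewrite (ge0_integralDZl leb (measurable_itv _) measurable_rk measurable_kN)
  ?(ltW dd_gt0) //; first last.
- by move=> x _; rewrite mule_ge0 //; apply: integral_ge0 => a _; rewrite lee_fin.
- by move=> x _; rewrite lee_fin mulr_ge0 ?rho_ge0 ?exp_kernel_ge0.
rewrite integral_krho integral_kq integral_exp_kernel_cumulative // integral_rk addeC.
by move/(congr1 (fun z => z - dd%:E * J)%E); rewrite !addeK ?fin_numM.
Qed.

End positive_rate.

Lemma stationary_density_zero : dd = 0 ->
  (rho r)%:E = (lam%:E * \int[q]_(a in `]r, +oo[) (expR (- (dd * (a - r))))%:E)%E.
Proof.
move=> dd0.
have -> : (\int[q]_(a in `]r, +oo[) (expR (- (dd * (a - r))))%:E = q [set` `]r, +oo[])%E.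
  rewrite dd0 -[RHS]mul1e -integral_cst //.
  by apply: eq_integral => a _; rewrite mul0r oppr0 expR0.
have rhoE x : r < x -> rho x = rho r - lam * Q x.
  by move=> rx; have := stationary_at _ rx; rewrite dd0 mul0r addr0 => <-; ring.
pose Qy := fine (q [set` `]r, +oo[]).
have QyE : q [set` `]r, +oo[] = Qy%:E by exact: q_fin.
have Q_le x : Q x <= Qy.
  rewrite -lee_fin -QyE -q_fin //; apply: le_measure; rewrite ?inE //.
  exact: subset_itvl.
rewrite QyE -EFinM; congr EFin; apply/eqP; rewrite eq_le; apply/andP; split.
  rewrite leNgt; apply/negP => lt_rho.
  have := integral_rho0_lty.
  rewrite (@integral_itv_oy_lbound _ _ _ (rho r - lam * Qy)) ?subr_gt0 //.
    exact: measurable_funTS.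
  by move=> x rx; rewrite rho0E // (rhoE x rx) lerD2l lerN2 ler_wpM2l.
have [->|lam_neq0] := eqVneq lam 0; first by rewrite mul0r rho_ge0.
have lam_gt0 : 0 < lam by rewrite lt_neqAle eq_sym lam_neq0.
rewrite mulrC -ler_pdivlMr // -lee_fin -QyE.
apply: measure_itv_oy_le => x rx.
(* Reach q through its probability coercion again, so that q_fin matches. *)
change (q [set` `]r, x]] <= (rho r / lam)%:E)%E.
rewrite q_fin // lee_fin ler_pdivlMr // mulrC.
by rewrite -subr_ge0 -rhoE // rho_ge0 // (le_trans r_ge0 (ltW rx)).
Qed.

End stationary_density.

Theorem proposition2p3 (R : realType) (lam dd : R)
  (q : probability (measurableTypeR R) R)
  (qa : {measure set (measurableTypeR R) -> \bar R})
  (n : nat) (rj pj : 'I_n -> R)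
  (rho : R -> R) :
  0 <= lam -> 0 <= dd ->
  (* q is a probability measure on (0, +oo) *)
  q [set` `]-oo, 0]] = 0%E ->
  (* decomposition q = q_a + sum_j p^j delta_{r^j} *)
  qa `<< (@lebesgue_measure R) ->
  injective rj ->
  (forall j, 0 < rj j) ->
  (forall j, 0 < pj j) ->
  (forall A, measurable A ->
     q A = (qa A + \sum_(j < n) (pj j)%:E * \d_(rj j) A)%E) ->
  (* finite first moment *)
  (\int[q]_x (`|x|)%:E < +oo)%E ->
  (* rho >= 0 on [0, oo) with finite mass *)
  (forall r, 0 <= r -> 0 <= rho r) ->
  (@lebesgue_measure R).-integrable `[0, +oo[ (fun r => (rho r)%:E) ->
  (* stationary equation *)
  (forall s r, 0 <= s -> s < r ->
     ((rho r - rho s)%:E + lam%:E * q [set` `]s, r]])%E =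
     (dd%:E * \int[@lebesgue_measure R]_(a in `]s, r]) (rho a)%:E)%E) ->
  {ae @lebesgue_measure R, forall r, 0 <= r ->
     (rho r)%:E =
     (lam%:E * \int[q]_(a in `]r, +oo[) (expR (- (dd * (a - r))))%:E)%E}.
Proof.
move=> lam_ge0 dd_ge0 _ _ _ _ _ _ _ rho_ge0 rho_integrable stationary.
apply: aeW => r r_ge0.
move: dd_ge0; rewrite le_eqVlt => /predU1P[dd0|dd_gt0].
- exact: stationary_density_zero.
- exact: stationary_density_pos.
Qed.
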